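(* Let $(p,q)\in(\mathcal{H}\times\mathcal{H})\setminus\Delta$. Then, for any horizontal vectors $v\in H_p$ and $v'\in H_q$, we have \begin{equation} |\Omega_{\mathcal{H}}(v,v')|=2\cdot\frac{|v|\,|v'|}{d_{\mathcal{H}}(p,q)^2}. \end{equation} Moreover, if $K$ is a Legendrian knot passing through $p$, $q$ and $v$ and $v'$ are tangent to $K$, then the absolute value of the argument of $\Omega_{\mathcal{H}}(v,v')$ equals $\theta_K(p,q)$.
   Context: $\mathcal{H}=\mathbb{C}\times\mathbb{R}$ is the 3-dimensional Heisenberg group with coordinates $(z,u)=(x,y,u)$, group law $(z,u)\cdot(z',u')=(z+z',u+u'-\tfrac{1}{2}\Im(z\overline{z'}))$, horizontal distribution $H$ spanned by $X=\partial_x-\tfrac12 y\,\partial_u$, $Y=\partial_y+\tfrac12 x\,\partial_u$ (orthonormal, norm $|\cdot|$). The Korányi distance is $d_{\mathcal{H}}(p,q)=\|p^{-1}q\|_{\mathcal{H}}$, $\|(x,y,u)\|_{\mathcal{H}}=\sqrt[4]{(x^2+y^2)^2+16u^2}$; $\Delta$ is the diagonal. For $p=(z,u)$ let $A(p)=|z|^2-4iu$, and $\rho(p,q)=A(p^{-1}q)$. The complex 2-form on $(\mathcal{H}\times\mathcal{H})\setminus\Delta$ is $\Omega_{\mathcal{H}}=d_pd_q\log\rho$ (exterior derivatives in the first and second factors). For a Legendrian knot $K$ (smooth embedded closed Legendrian curve) and distinct $p,q\in K$, $\Gamma_K(p,q)$ is the unique $\mathbb{R}$-circle (boundary of a totally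 geodesic totally real surface in the complex hyperbolic ball, with $\partial B^2_{\mathbb{C}}\cong\mathcal{H}\cup\{\infty\}$) through $p$ and $q$ tangent to $K$ at $p$, and $\theta_K(p,q)\in[0,\pi]$ is the angle between $\Gamma_K(p,q)$ and $\Gamma_K(q,p)$, with orientations induced by an orientation of $K$. *)

From Stdlib Require Import Reals.
From Coquelicot Require Import Coquelicot.
Open Scope R_scope.

(** Points of the Heisenberg group H = C x R, in coordinates (x,y,u),
    and (Euclidean) coordinate vectors of R^3 (used for tangent vectors). *)
Record R3 := mkR3 { cx : R; cy : R; cu : R }.
Definition Hpt := R3.

(** Group law (z,u).(z',u') = (z+z', u+u' - 1/2 Im(z conj z')),
    with Im(z conj z') = y x' - x y'. *)
Definition Hmul (p q : Hpt) : Hpt :=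
  mkR3 (cx p + cx q) (cy p + cy q)
       (cu p + cu q - / 2 * (cy p * cx q - cx p * cy q)).
Definition Hinv (p : Hpt) : Hpt := mkR3 (- cx p) (- cy p) (- cu p).

Definition Hnorm (p : Hpt) : R :=
  sqrt (sqrt ((cx p ^ 2 + cy p ^ 2) ^ 2 + 16 * cu p ^ 2)).
Definition dH (p q : Hpt) : R := Hnorm (Hmul (Hinv p) q).

Definition Afun (p : Hpt) : Complex.C := (cx p ^ 2 + cy p ^ 2, - 4 * cu p).
Definition rhoH (p q : Hpt) : Complex.C := Afun (Hmul (Hinv p) q).

(** Horizontal vector a X_p + b Y_p, where X = d_x - y/2 d_u, Y = d_y + x/2 d_u;
    its norm (X,Y orthonormal) is sqrt(a^2+b^2). *)
Definition hvec (p : Hpt) (a b : R) : R3 :=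
  mkR3 a b (/ 2 * (- cy p * a + cx p * b)).
Definition hnorm2 (a b : R) : R := sqrt (a ^ 2 + b ^ 2).

Definition padd (p : Hpt) (v : R3) (s : R) : Hpt :=
  mkR3 (cx p + s * cx v) (cy p + s * cy v) (cu p + s * cu v).

Definition dC (f : R -> Complex.C) (t : R) : Complex.C :=
  (Derive (fun s => Re (f s)) t, Derive (fun s => Im (f s)) t).

(** Omega_H = d_p d_q log rho, evaluated on (v, v') with v in T_p H, v' in T_q H:
    d_q log rho = (d_q rho) / rho (independent of the branch of log), then
    differentiate in p in the direction v:
      Omega(v,v') = d/ds|_0 [ (d/dt|_0 rho(p+sv, q+tv')) / rho(p+sv, q) ]. *)
Definition OmegaH (p q : Hpt) (v v' : R3) : Complex.C :=
  dC (fun s => Cdiv (dC (fun t => rhoH (padd p v s) (padd q v' t)) 0)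
                    (rhoH (padd p v s) q)) 0.

(** |arg w| in [0, pi] for w <> 0. *)
Definition abs_arg (w : Complex.C) : R := acos (Re w / Cmod w).

Definition smooth (f : R -> R) : Prop := forall (n : nat) (t : R), ex_derive_n f n t.
Definition smooth_curve (g : R -> R3) : Prop :=
  smooth (fun t => cx (g t)) /\ smooth (fun t => cy (g t)) /\ smooth (fun t => cu (g t)).
Definition velocity (g : R -> R3) (t : R) : R3 :=
  mkR3 (Derive (fun s => cx (g s)) t) (Derive (fun s => cy (g s)) t)
       (Derive (fun s => cu (g s)) t).
Definition nonzero3 (w : R3) : Prop := ~ (cx w = 0 /\ cy w = 0 /\ cu w = 0).
Definition scale3 (l : R) (w : R3) : R3 := mkR3 (l * cx w) (l * cy w) (l * cu w).

(** Horizontality of a tangent vector w at p: w in span(X_p, Y_p),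
    i.e.  w_u = 1/2 (x w_y - y w_x). *)
Definition horizontal_at (p : Hpt) (w : R3) : Prop :=
  cu w = / 2 * (cx p * cy w - cy p * cx w).

(** A Legendrian knot: a smooth, regular, horizontal, closed, simple curve,
    parametrised by a T-periodic map gamma injective on [0,T);
    its orientation is the one given by the parametrisation. *)
Definition legendrian_knot (gamma : R -> Hpt) (T : R) : Prop :=
  0 < T /\
  smooth_curve gamma /\
  (forall t, gamma (t + T) = gamma t) /\
  (forall s t, 0 <= s < T -> 0 <= t < T -> gamma s = gamma t -> s = t) /\
  (forall t, nonzero3 (velocity gamma t)) /\
  (forall t, horizontal_at (gamma t) (velocity gamma t)).

(** Complex hyperbolic plane: C^3 with the Hermitian form
      h(X,Y) = X1 conj(Y3) + X3 conj(Y1) - 2 X2 conj(Y2)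
    (the ball is the set of lines of h-positive vectors); the boundary is the set
    of h-null lines, identified with H u {oo} via the lift
      psi(z,u) = (|z|^2 + 4 i u, z, 1),   oo = [1:0:0]. *)
Record C3 := mkC3 { c1 : Complex.C; c2 : Complex.C; c3 : Complex.C }.
Definition hform (X Y : C3) : Complex.C :=
  Cplus (Cplus (Cmult (c1 X) (Cconj (c3 Y))) (Cmult (c3 X) (Cconj (c1 Y))))
        (Cmult (RtoC (-2)) (Cmult (c2 X) (Cconj (c2 Y)))).
Definition lift (p : Hpt) : C3 :=
  mkC3 (cx p ^ 2 + cy p ^ 2, 4 * cu p) (cx p, cy p) (RtoC 1).
Definition det3 (a b c : C3) : Complex.C :=
  (Cplus (Cplus (Cmult (c1 a) (Cminus (Cmult (c2 b) (c3 c)) (Cmult (c3 b) (c2 c))))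
                       (Cmult (c1 b) (Cminus (Cmult (c2 c) (c3 a)) (Cmult (c3 c) (c2 a)))))
                (Cmult (c1 c) (Cminus (Cmult (c2 a) (c3 b)) (Cmult (c3 a) (c2 b))))).
Definition cscale (l : Complex.C) (X : C3) : C3 :=
  mkC3 (Cmult l (c1 X)) (Cmult l (c2 X)) (Cmult l (c3 X)).
Definition in_Rspan (e1 e2 e3 X : C3) : Prop :=
  exists r1 r2 r3 : R,
    X = mkC3 (Cplus (Cplus (Cmult (RtoC r1) (c1 e1)) (Cmult (RtoC r2) (c1 e2))) (Cmult (RtoC r3) (c1 e3)))
             (Cplus (Cplus (Cmult (RtoC r1) (c2 e1)) (Cmult (RtoC r2) (c2 e2))) (Cmult (RtoC r3) (c2 e3)))
             (Cplus (Cplus (Cmult (RtoC r1) (c3 e1)) (Cmult (RtoC r2) (c3 e2))) (Cmult (RtoC r3) (c3 e3))).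

(** A totally geodesic totally real surface of the ball is the projectivisation of
    a real 3-dimensional subspace V = span_R(e1,e2,e3) of C^3 with V (x) C = C^3
    (e1,e2,e3 C-linearly independent) on which h is real-valued.  Its boundary
    R-circle consists of the null lines of V.  [RcircleH S] says that S is the
    finite part (the part in H) of such an R-circle. *)
Definition RcircleH (S : Hpt -> Prop) : Prop :=
  exists e1 e2 e3 : C3,
    det3 e1 e2 e3 <> RtoC 0 /\
    (forall X Y, (X = e1 \/ X = e2 \/ X = e3) -> (Y = e1 \/ Y = e2 \/ Y = e3) ->
                 Im (hform X Y) = 0) /\
    (forall p, S p <-> exists l : Complex.C, l <> RtoC 0 /\ in_Rspan e1 e2 e3 (cscale l (lift p))).

(** A regular smooth parametrisation (possibly non-injective, e.g. periodic) of a
    piece of S; it determines an orientation of the curve S. *)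
Definition oriented_param (S : Hpt -> Prop) (c : R -> Hpt) : Prop :=
  smooth_curve c /\ (forall t, nonzero3 (velocity c t)) /\ (forall t, S (c t)).

(** Horizontal inner product and angle between horizontal vectors at a point:
    for horizontal w, w = w_x X + w_y Y, and X, Y are orthonormal. *)
Definition hinner (w w' : R3) : R := cx w * cx w' + cy w * cy w'.
Definition hangle (w w' : R3) : R :=
  acos (hinner w w' / (sqrt (hinner w w) * sqrt (hinner w' w'))).

From Stdlib Require Import Reals Lra Psatz.
From Coquelicot Require Import Coquelicot.
Open Scope R_scope.

(* For horizontal vectors with complex coordinates z at p and z' at q, a direct
   computation gives Omega(v, v') = 2 z conj(z') conj(rho) / rho^2 with rho = rho(p, q),
   and |rho| = d_H(p, q)^2; this is the modulus formula.

   For the argument, lift the R-circle Gamma = Gamma_K(q, p) to the real 3-space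
   V of C^3 on which the Hermitian form h is real.  Pick lifts P of p and Q of q in V
   with h(P, Q) = 1 and put N = P + Q.  Positivity of Cartan's invariant
   Re h(a, b) h(b, c) h(c, a) >= 0 shows that the lift X of every point of Gamma has
   h(X, N) <> 0, so Y = X / h(X, N) is a curve in V, and so is Y'.  Reality of h(Y, Y')
   makes Gamma horizontal, and reality of det(Y, Y', N) (against a basis of V) gives a
   real, nowhere vanishing, hence sign-constant function along Gamma.  Comparing it at
   q, where Gamma is tangent to K, and at p shows that conj of the tangent of Gamma at p
   is a positive multiple of conj(z') conj(rho) / rho^2; so z times it is a positive
   multiple of Omega(v, v'), and arg Omega is the angle between K and Gamma at p. *)

Lemma is_derive_eq (f : R -> R) (t a b : R) : is_derive f t a -> a = b -> is_derive f t b.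
Proof. now intros H <-. Qed.

Lemma is_derive_Rplus (f g : R -> R) t a b :
  is_derive f t a -> is_derive g t b -> is_derive (fun s => f s + g s) t (a + b).
Proof. apply (@is_derive_plus R_AbsRing R_NormedModule). Qed.

Lemma is_derive_Ropp (f : R -> R) t a : is_derive f t a -> is_derive (fun s => - f s) t (- a).
Proof. apply (@is_derive_opp R_AbsRing R_NormedModule). Qed.

Definition is_derive_C (f : R -> C) (t : R) (z : C) : Prop :=
  is_derive (fun s => Re (f s)) t (Re z) /\ is_derive (fun s => Im (f s)) t (Im z).

Section ComplexDerivative.
Local Open Scope C_scope.

Lemma is_derive_C_ext f g t z :
  (forall s, f s = g s) -> is_derive_C f t z -> is_derive_C g t z.
Proof.
intros E [Hre Him]; split; eapply is_derive_ext; eauto; intros s; simpl; now rewrite E.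
Qed.

Lemma is_derive_C_eq f t z z' : is_derive_C f t z -> z = z' -> is_derive_C f t z'.
Proof. now intros H <-. Qed.

Lemma is_derive_C_const (c : C) t : is_derive_C (fun _ => c) t 0.
Proof. split; apply (@is_derive_const R_AbsRing R_NormedModule). Qed.

Lemma is_derive_C_plus f g t a b :
  is_derive_C f t a -> is_derive_C g t b -> is_derive_C (fun s => f s + g s) t (a + b).
Proof. intros [Hf1 Hf2] [Hg1 Hg2]; split; now apply is_derive_Rplus. Qed.

Lemma is_derive_C_mult f g t a b :
  is_derive_C f t a -> is_derive_C g t b ->
  is_derive_C (fun s => f s * g s) t (a * g t + f t * b).
Proof.
intros [Hf1 Hf2] [Hg1 Hg2]; split; simpl; eapply is_derive_eq.
- apply is_derive_Rplus; [|apply is_derive_Ropp]; apply Derive.is_derive_mult; eassumption.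
- unfold Re, Im; simpl; ring.
- apply is_derive_Rplus; apply Derive.is_derive_mult; eassumption.
- unfold Re, Im; simpl; ring.
Qed.

Lemma is_derive_C_conj f t a : is_derive_C f t a -> is_derive_C (fun s => Cconj (f s)) t (Cconj a).
Proof. intros [H1 H2]; split; [exact H1 | now apply is_derive_Ropp]. Qed.

Lemma Cnorm2_neq0 (z : C) : z <> 0 -> (Re z ^ 2 + Im z ^ 2 <> 0)%R.
Proof.
intros Hz E; apply Hz; destruct z as [x y]; unfold Re, Im in E; simpl in E.
assert (x = 0)%R by nra; assert (y = 0)%R by nra; subst; reflexivity.
Qed.

Lemma is_derive_C_inv f t a : is_derive_C f t a -> f t <> 0 ->
  is_derive_C (fun s => / f s) t (- a / (f t * f t)).
Proof.
intros [H1 H2] Hf; pose proof (Cnorm2_neq0 _ Hf) as Hn.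
assert (Hd := is_derive_inv _ _ _
  (is_derive_Rplus _ _ _ _ _ (is_derive_pow _ 2 _ _ H1) (is_derive_pow _ 2 _ _ H2)) Hn).
split; simpl; eapply is_derive_eq.
- apply Derive.is_derive_mult; [exact H1 | exact Hd].
- unfold Re, Im in *; destruct (f t) as [x y], a as [u v]; simpl in *; field; split; auto; nra.
- apply Derive.is_derive_mult; [apply is_derive_Ropp; exact H2 | exact Hd].
- unfold Re, Im in *; destruct (f t) as [x y], a as [u v]; simpl in *; field; split; auto; nra.
Qed.

Lemma is_derive_C_div f g t a b : is_derive_C f t a -> is_derive_C g t b -> g t <> 0 ->
  is_derive_C (fun s => f s / g s) t ((a * g t - f t * b) / (g t * g t)).
Proof.
intros Hf Hg Hg0; eapply is_derive_C_eq.
- apply (is_derive_C_mult f (fun s => / g s)); [exact Hf | eapply is_derive_C_inv; eassumption].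
- now field.
Qed.

Lemma dC_correct f t z : is_derive_C f t z -> dC f t = z.
Proof.
intros [H1 H2]; unfold dC.
rewrite (is_derive_unique (fun s : R => Re (f s)) t _ H1),
  (is_derive_unique (fun s : R => Im (f s)) t _ H2).
destruct z; reflexivity.
Qed.

Lemma is_derive_C_Im_eq0 f t z : (forall s, Im (f s) = 0%R) -> is_derive_C f t z -> Im z = 0%R.
Proof.
intros Hf [_ H2].
apply (is_derive_unique (fun s : R => Im (f s))) in H2.
rewrite <- H2, (Derive_ext _ (fun _ => 0%R)) by exact Hf.
apply Derive_const.
Qed.

Lemma is_derive_C_continuous_Re f t z : is_derive_C f t z -> continuous (fun s => Re (f s)) t.
Proof.
intros [H1 _]; apply (ex_derive_continuous (K := R_AbsRing) (V := R_NormedModule)).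
now exists (Re z).
Qed.

End ComplexDerivative.

Lemma RtoC_Re (z : C) : Im z = 0 -> RtoC (Re z) = z.
Proof. destruct z as [x y]; unfold Re, Im, RtoC; simpl; now intros ->. Qed.

Lemma Cconj_RtoC (r : R) : Cconj (RtoC r) = RtoC r.
Proof. unfold Cconj, RtoC; simpl; f_equal; ring. Qed.

Lemma Cconj_neq0 (z : C) : z <> 0 -> Cconj z <> 0.
Proof. intros Hz E; apply Hz; rewrite <- (Cconj_conj z), E; apply Cconj_RtoC. Qed.

Lemma Cinv_neq0 (z : C) : z <> 0 -> (/ z)%C <> 0.
Proof. intros Hz E; apply C1_nz; now rewrite <- (Cinv_r z Hz), E, Cmult_0_r. Qed.

Lemma continuous_nonvanishing_same_sign (phi : R -> R) a b :
  (forall t, continuous phi t) -> (forall t, phi t <> 0) -> 0 < phi a * phi b.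
Proof.
intros Hc Hn.
destruct (Rlt_or_le 0 (phi a * phi b)) as [|Hab]; [assumption | exfalso].
assert (Hcont : continuity phi) by (intros x; apply continuity_pt_filterlim, Hc).
destruct (IVT_gen phi a b 0 Hcont) as (x & _ & Hx); [|exact (Hn x Hx)].
pose proof (Hn a); pose proof (Hn b).
unfold Rmin, Rmax; destruct (Rle_dec (phi a) (phi b)); split; nra.
Qed.

Definition Cxy (w : R3) : C := (cx w, cy w).

Section KoranyiKernel.
Local Open Scope C_scope.

Lemma rhoH_derive_r p q a b :
  is_derive_C (fun t => rhoH p (padd q (hvec q a b) t)) 0 (2 * (Cxy q - Cxy p) * Cconj (a, b)).
Proof.
split; unfold rhoH, Afun, Hmul, Hinv, padd, hvec, Cxy, Re, Im; simpl;
  auto_derive; auto; field.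
Qed.

Lemma rhoH_derive_l p q a b :
  is_derive_C (fun s => rhoH (padd p (hvec p a b) s) q) 0 (- 2 * Cconj (Cxy q - Cxy p) * (a, b)).
Proof.
split; unfold rhoH, Afun, Hmul, Hinv, padd, hvec, Cxy, Re, Im; simpl;
  auto_derive; auto; field.
Qed.

Lemma rhoH_plus_conj p q :
  rhoH p q + Cconj (rhoH p q) = 2 * (Cxy q - Cxy p) * Cconj (Cxy q - Cxy p).
Proof.
unfold rhoH, Afun, Hmul, Hinv, Cxy, Cconj, Cplus, Cminus, Cmult, Copp, RtoC; simpl.
f_equal; field.
Qed.

Lemma rhoH_eq0 p q : rhoH p q = 0 -> p = q.
Proof.
destruct p as [x y u], q as [x' y' u']; unfold rhoH, Afun, Hmul, Hinv; simpl.
intros E; injection E; intros Eu Ez.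
destruct (Rplus_sqr_eq_0 (x' - x) (y' - y)) as [Hx Hy].
{ unfold Rsqr; rewrite <- Ez; ring. }
assert (x' = x) by lra; assert (y' = y) by lra; subst.
ring_simplify in Eu; assert (u' = u) by lra; now subst.
Qed.

Lemma padd_0 p v : padd p v 0 = p.
Proof. destruct p; unfold padd; simpl; f_equal; ring. Qed.

Lemma OmegaH_hvec p q a b a' b' : p <> q ->
  OmegaH p q (hvec p a b) (hvec q a' b')
  = 2 * (a, b) * Cconj (a', b') * Cconj (rhoH p q) / (rhoH p q * rhoH p q).
Proof.
intros Hpq.
assert (Hrho : rhoH p q <> 0) by (intros E; apply Hpq, rhoH_eq0, E).
set (Z := Cxy q - Cxy p).
assert (Hnum : is_derive_C (fun s => 2 * (Cxy q - Cxy (padd p (hvec p a b) s)) * Cconj (a', b')) 0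
                 (- 2 * (a, b) * Cconj (a', b'))).
{ split; unfold padd, hvec, Cxy, Re, Im; simpl; auto_derive; auto; ring. }
unfold OmegaH.
rewrite (dC_correct _ 0 ((- 2 * (a, b) * Cconj (a', b') * rhoH p q
                         - 2 * Z * Cconj (a', b') * (- 2 * Cconj Z * (a, b))) / (rhoH p q * rhoH p q))).
- replace (Cconj (rhoH p q)) with (2 * Z * Cconj Z - rhoH p q)
    by (unfold Z; rewrite <- rhoH_plus_conj; ring).
  field; exact Hrho.
- apply (is_derive_C_ext (fun s => 2 * (Cxy q - Cxy (padd p (hvec p a b) s)) * Cconj (a', b')
                                   / rhoH (padd p (hvec p a b) s) q)).
  { intros s; now rewrite (dC_correct _ _ _ (rhoH_derive_r _ q a' b')). }
  eapply is_derive_C_eq.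
  + apply is_derive_C_div; [exact Hnum | apply rhoH_derive_l | now rewrite padd_0].
  + cbv beta; now rewrite padd_0.
Qed.

Lemma Cmod_rhoH p q : Cmod (rhoH p q) = (dH p q ^ 2)%R.
Proof.
unfold dH, Hnorm, Cmod, rhoH, Afun.
rewrite pow2_sqrt by apply sqrt_pos.
simpl; f_equal; ring.
Qed.

Lemma Cmod_OmegaH_hvec p q a b a' b' : p <> q ->
  Cmod (OmegaH p q (hvec p a b) (hvec q a' b')) = (2 * (hnorm2 a b * hnorm2 a' b') / dH p q ^ 2)%R.
Proof.
intros Hpq.
assert (Hrho : rhoH p q <> 0) by (intros E; apply Hpq, rhoH_eq0, E).
assert (Hmod : Cmod (rhoH p q) <> 0%R) by (intros E; apply Hrho, Cmod_eq_0, E).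
rewrite OmegaH_hvec, Cmod_div by (try apply Cmult_neq_0; assumption).
rewrite !Cmod_mult, !Cmod_conj, Cmod_R, Rabs_pos_eq, <- Cmod_rhoH by lra.
unfold hnorm2, Cmod; simpl; now field.
Qed.
End KoranyiKernel.

Lemma hvec_of_horizontal p v : horizontal_at p v -> v = hvec p (cx v) (cy v).
Proof. destruct v; unfold horizontal_at, hvec; simpl; intros ->; f_equal; ring. Qed.

Lemma horizontal_at_scale3 p l v : horizontal_at p v -> horizontal_at p (scale3 l v).
Proof. unfold horizontal_at, scale3; simpl; intros ->; ring. Qed.

Lemma Cxy_scale3 l v : Cxy (scale3 l v) = (l * Cxy v)%C.
Proof. unfold Cxy, scale3, Cmult, RtoC; simpl; f_equal; ring. Qed.

Lemma OmegaH_horizontal p q v v' : p <> q -> horizontal_at p v -> horizontal_at q v' ->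
  OmegaH p q v v'
  = (2 * Cxy v * Cconj (Cxy v') * Cconj (rhoH p q) / (rhoH p q * rhoH p q))%C.
Proof.
intros Hpq Hv Hv'; rewrite (hvec_of_horizontal p v Hv), (hvec_of_horizontal q v' Hv').
now rewrite OmegaH_hvec.
Qed.

Lemma Cxy_neq0 p w : horizontal_at p w -> nonzero3 w -> Cxy w <> 0.
Proof.
unfold horizontal_at, nonzero3, Cxy; intros Hw Hn E; injection E as Ex Ey.
apply Hn; repeat split; auto; rewrite Hw, Ex, Ey; ring.
Qed.

Definition C3plus (X Y : C3) : C3 := mkC3 (c1 X + c1 Y)%C (c2 X + c2 Y)%C (c3 X + c3 Y)%C.

Definition dlift (p : Hpt) (w : R3) : C3 :=
  mkC3 (2 * cx p * cx w + 2 * cy p * cy w, 4 * cu w) (Cxy w) (RtoC 0).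

Lemma C3_eq (X Y : C3) : c1 X = c1 Y -> c2 X = c2 Y -> c3 X = c3 Y -> X = Y.
Proof. destruct X, Y; simpl; now intros -> -> ->. Qed.

Ltac C3_components :=
  repeat match goal with X : C3 |- _ => destruct X as [[? ?] [? ?] [? ?]] end;
  repeat match goal with z : C |- _ => destruct z end;
  unfold hform, det3, cscale, C3plus, lift, dlift, Cxy, rhoH, Afun, Hmul, Hinv,
    Cconj, Cplus, Cminus, Copp, Cmult, RtoC, Re, Im in *; simpl in *.

Section HermitianForm.
Local Open Scope C_scope.

Lemma hform_sym X Y : hform Y X = Cconj (hform X Y).
Proof. C3_components; f_equal; ring. Qed.

Lemma hform_scale_l a X Y : hform (cscale a X) Y = a * hform X Y.
Proof. C3_components; f_equal; ring. Qed.

Lemma hform_scale_r a X Y : hform X (cscale a Y) = Cconj a * hform X Y.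
Proof. C3_components; f_equal; ring. Qed.

Lemma hform_plus_r X Y Z : hform X (C3plus Y Z) = hform X Y + hform X Z.
Proof. C3_components; f_equal; ring. Qed.

Lemma hform_lift p q : hform (lift p) (lift q) = rhoH p q.
Proof. C3_components; f_equal; field. Qed.

Lemma hform_lift_self p : hform (lift p) (lift p) = 0.
Proof. C3_components; f_equal; field. Qed.

Lemma hform_lift_eq0 p q : hform (lift p) (lift q) = 0 -> p = q.
Proof. rewrite hform_lift; apply rhoH_eq0. Qed.

Lemma Re_hform_lift_cycle a b d :
  Re (hform (lift a) (lift b) * hform (lift b) (lift d) * hform (lift d) (lift a))
  = (Re (det3 (lift a) (lift b) (lift d)) ^ 2 + Im (det3 (lift a) (lift b) (lift d)) ^ 2)%R.
Proof. destruct a, b, d; C3_components; ring. Qed.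

Lemma horizontal_at_iff p w : horizontal_at p w <-> Im (hform (lift p) (dlift p w)) = 0%R.
Proof. destruct p, w; unfold horizontal_at; C3_components; split; intros; lra. Qed.

Lemma det3_lift_dlift p w N : horizontal_at p w ->
  det3 (lift p) (dlift p w) N = - Cxy w * Cconj (hform (lift p) N).
Proof.
destruct p, w; unfold horizontal_at; simpl; intros ->.
C3_components; f_equal; field.
Qed.

End HermitianForm.

Definition is_derive_C3 (X : R -> C3) (t : R) (D : C3) : Prop :=
  is_derive_C (fun s => c1 (X s)) t (c1 D) /\ is_derive_C (fun s => c2 (X s)) t (c2 D) /\
  is_derive_C (fun s => c3 (X s)) t (c3 D).
Section LinearDerivatives.
Local Open Scope C_scope.
Lemma is_derive_C_linear X t D k1 k2 k3 : is_derive_C3 X t D ->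
  is_derive_C (fun s => k1 * c1 (X s) + k2 * c2 (X s) + k3 * c3 (X s)) t
    (k1 * c1 D + k2 * c2 D + k3 * c3 D).
Proof.
intros (H1 & H2 & H3).
assert (Hk : forall k : C, is_derive_C (fun _ => k) t 0) by (intros; apply is_derive_C_const).
eapply is_derive_C_eq.
- apply is_derive_C_plus; [apply is_derive_C_plus|]; apply is_derive_C_mult;
    [apply is_derive_C_const | exact H1 | apply is_derive_C_const | exact H2
    | apply is_derive_C_const | exact H3].
- cbv beta; ring.
Qed.

Lemma is_derive_C_hform_l X t D N : is_derive_C3 X t D ->
  is_derive_C (fun s => hform (X s) N) t (hform D N).
Proof.
intros HX.
assert (H := is_derive_C_linear X t D (Cconj (c3 N)) (-2 * Cconj (c2 N)) (Cconj (c1 N)) HX).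
eapply is_derive_C_ext, is_derive_C_eq; [| exact H |]; unfold hform; [intros s|]; ring.
Qed.

Lemma is_derive_C_det3_l X t D Y Z : is_derive_C3 X t D ->
  is_derive_C (fun s => det3 (X s) Y Z) t (det3 D Y Z).
Proof.
intros HX.
assert (H := is_derive_C_linear X t D (c2 Y * c3 Z - c3 Y * c2 Z) (c1 Z * c3 Y - c1 Y * c3 Z)
                                      (c1 Y * c2 Z - c1 Z * c2 Y) HX).
eapply is_derive_C_ext, is_derive_C_eq; [| exact H |]; unfold det3; [intros s|]; ring.
Qed.

Lemma is_derive_C3_scale g X t a D : is_derive_C g t a -> is_derive_C3 X t D ->
  is_derive_C3 (fun s => cscale (g s) (X s)) t (C3plus (cscale a (X t)) (cscale (g t) D)).
Proof.
intros Hg (H1 & H2 & H3); split; [|split].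
- exact (is_derive_C_mult g (fun s => c1 (X s)) t a (c1 D) Hg H1).
- exact (is_derive_C_mult g (fun s => c2 (X s)) t a (c2 D) Hg H2).
- exact (is_derive_C_mult g (fun s => c3 (X s)) t a (c3 D) Hg H3).
Qed.


Lemma is_derive_C3_lift (c : R -> Hpt) t :
  ex_derive (fun s => cx (c s)) t -> ex_derive (fun s => cy (c s)) t ->
  ex_derive (fun s => cu (c s)) t ->
  is_derive_C3 (fun s => lift (c s)) t (dlift (c t) (velocity c t)).
Proof.
intros Hx Hy Hu.
split; [|split]; split;
  unfold lift, dlift, velocity, Cxy, Re, Im; cbn [c1 c2 c3 cx cy cu fst snd].
- eapply is_derive_eq.
  + apply is_derive_Rplus; apply is_derive_pow; apply Derive_correct; assumption.
  + cbv beta; cbn [Init.Nat.pred INR]; ring.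
- apply is_derive_scal, Derive_correct, Hu.
- apply Derive_correct, Hx.
- apply Derive_correct, Hy.
- apply (@is_derive_const R_AbsRing R_NormedModule).
- apply (@is_derive_const R_AbsRing R_NormedModule).
Qed.
End LinearDerivatives.

Definition Ccomb (e1 e2 e3 : C3) (z1 z2 z3 : C) : C3 :=
  C3plus (C3plus (cscale z1 e1) (cscale z2 e2)) (cscale z3 e3).

Section Coordinates.
Local Open Scope C_scope.
Variables e1 e2 e3 : C3.

Lemma in_Rspan_Ccomb X :
  in_Rspan e1 e2 e3 X <-> exists r1 r2 r3 : R, X = Ccomb e1 e2 e3 r1 r2 r3.
Proof. reflexivity. Qed.

Lemma hform_Ccomb z1 z2 z3 w1 w2 w3 :
  hform (Ccomb e1 e2 e3 z1 z2 z3) (Ccomb e1 e2 e3 w1 w2 w3) =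
    z1 * Cconj w1 * hform e1 e1 + z1 * Cconj w2 * hform e1 e2 + z1 * Cconj w3 * hform e1 e3
  + z2 * Cconj w1 * hform e2 e1 + z2 * Cconj w2 * hform e2 e2 + z2 * Cconj w3 * hform e2 e3
  + z3 * Cconj w1 * hform e3 e1 + z3 * Cconj w2 * hform e3 e2 + z3 * Cconj w3 * hform e3 e3.
Proof. unfold hform, Ccomb, C3plus, cscale; simpl; rewrite ?Cplus_conj, ?Cmult_conj; ring. Qed.

Lemma det3_Ccomb z1 z2 z3 w1 w2 w3 u1 u2 u3 :
  det3 (Ccomb e1 e2 e3 z1 z2 z3) (Ccomb e1 e2 e3 w1 w2 w3) (Ccomb e1 e2 e3 u1 u2 u3) =
  det3 (mkC3 z1 z2 z3) (mkC3 w1 w2 w3) (mkC3 u1 u2 u3) * det3 e1 e2 e3.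
Proof. unfold det3, Ccomb, C3plus, cscale; simpl; ring. Qed.

Lemma cscale_det3_Ccomb W :
  cscale (det3 e1 e2 e3) W = Ccomb e1 e2 e3 (det3 W e2 e3) (det3 W e3 e1) (det3 W e1 e2).
Proof. apply C3_eq; unfold det3, Ccomb, C3plus, cscale; simpl; ring. Qed.

End Coordinates.

Section ScaledLifts.
Local Open Scope C_scope.

Lemma hform_scaled_lifts_eq0 (la lb : C) a b : la <> 0 -> lb <> 0 ->
  hform (cscale la (lift a)) (cscale lb (lift b)) = 0 -> a = b.
Proof.
intros Ha Hb E; apply hform_lift_eq0.
rewrite hform_scale_l, hform_scale_r in E.
destruct (Ceq_dec (hform (lift a) (lift b)) 0) as [|Hab]; [assumption|].
exfalso; revert E; repeat apply Cmult_neq_0; try apply Cconj_neq0; assumption.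
Qed.

Lemma hform_scaled_lifts_cycle_nonneg (la lb ld : C) a b d :
  (0 <= Re (hform (cscale la (lift a)) (cscale lb (lift b))
            * hform (cscale lb (lift b)) (cscale ld (lift d))
            * hform (cscale ld (lift d)) (cscale la (lift a))))%R.
Proof.
rewrite !hform_scale_l, !hform_scale_r.
replace (la * (Cconj lb * hform (lift a) (lift b)) * (lb * (Cconj ld * hform (lift b) (lift d)))
         * (ld * (Cconj la * hform (lift d) (lift a))))
  with (RtoC (Cmod la ^ 2 * Cmod lb ^ 2 * Cmod ld ^ 2)
        * (hform (lift a) (lift b) * hform (lift b) (lift d) * hform (lift d) (lift a)))
  by (rewrite !RtoC_mult, !Cmod2_conj; ring).
rewrite re_scal_l, Re_hform_lift_cycle.
apply Rmult_le_pos; [|nra].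
apply Rmult_le_pos; [apply Rmult_le_pos|]; apply pow2_ge_0.
Qed.

End ScaledLifts.

Lemma smooth_ex_derive (f : R -> R) t : smooth f -> ex_derive f t.
Proof. intros H; exact (H 1%nat t). Qed.

(* Up to sign, det(Y, Y', N) for the normalised lift Y = lift c / h(lift c, N) of a
   horizontal curve c, by [det3_lift_dlift]. *)
Definition tangent_ratio (c : R -> Hpt) (N : C3) (t : R) : C :=
  (Cxy (velocity c t) * Cconj (hform (lift (c t)) N)
   / (hform (lift (c t)) N * hform (lift (c t)) N))%C.

Section RealForm.
Local Open Scope C_scope.

Variables e1 e2 e3 : C3.
Hypothesis e_indep : det3 e1 e2 e3 <> 0.
Hypothesis e_real : forall X Y, (X = e1 \/ X = e2 \/ X = e3) -> (Y = e1 \/ Y = e2 \/ Y = e3) ->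
  Im (hform X Y) = 0%R.

Local Notation V := (in_Rspan e1 e2 e3).
Local Notation de := (det3 e1 e2 e3).

Lemma in_Rspan_hform_real X Y : V X -> V Y -> Im (hform X Y) = 0%R.
Proof.
rewrite !in_Rspan_Ccomb; intros (r1 & r2 & r3 & ->) (s1 & s2 & s3 & ->).
assert (He : forall X Y, (X = e1 \/ X = e2 \/ X = e3) -> (Y = e1 \/ Y = e2 \/ Y = e3) ->
  snd (hform X Y) = 0%R) by exact e_real.
rewrite hform_Ccomb; unfold Cmult, Cconj, Cplus, RtoC, Im; cbn [fst snd].
rewrite !He by tauto; ring.
Qed.

Lemma in_Rspan_scale (r : R) X : V X -> V (cscale r X).
Proof.
rewrite !in_Rspan_Ccomb; intros (r1 & r2 & r3 & ->); exists (r * r1)%R, (r * r2)%R, (r * r3)%R.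
apply C3_eq; simpl; rewrite !RtoC_mult; ring.
Qed.

Lemma in_Rspan_plus X Y : V X -> V Y -> V (C3plus X Y).
Proof.
rewrite !in_Rspan_Ccomb; intros (r1 & r2 & r3 & ->) (s1 & s2 & s3 & ->).
exists (r1 + s1)%R, (r2 + s2)%R, (r3 + s3)%R.
apply C3_eq; simpl; rewrite !RtoC_plus; ring.
Qed.

Lemma in_Rspan_basis : V e1 /\ V e2 /\ V e3.
Proof.
rewrite !in_Rspan_Ccomb.
split; [|split]; [exists 1%R, 0%R, 0%R | exists 0%R, 1%R, 0%R | exists 0%R, 0%R, 1%R];
  apply C3_eq; simpl; ring.
Qed.

Lemma in_Rspan_det3_real X Y Z : V X -> V Y -> V Z -> Im (det3 X Y Z / de) = 0%R.
Proof.
rewrite !in_Rspan_Ccomb; intros (r1 & r2 & r3 & ->) (s1 & s2 & s3 & ->) (t1 & t2 & t3 & ->).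
rewrite det3_Ccomb; unfold Cdiv; rewrite <- Cmult_assoc, Cinv_r, Cmult_1_r by exact e_indep.
unfold det3, Cmult, Cminus, Cplus, Copp, RtoC, Im; simpl; ring.
Qed.

Lemma in_Rspan_of_coords W :
  Im (det3 W e2 e3 / de) = 0%R -> Im (det3 W e3 e1 / de) = 0%R -> Im (det3 W e1 e2 / de) = 0%R ->
  V W.
Proof.
intros H1 H2 H3; apply in_Rspan_Ccomb.
exists (Re (det3 W e2 e3 / de)), (Re (det3 W e3 e1 / de)), (Re (det3 W e1 e2 / de)).
rewrite !RtoC_Re by assumption.
transitivity (cscale (/ de) (cscale de W)).
- apply C3_eq; simpl; field; exact e_indep.
- rewrite cscale_det3_Ccomb; apply C3_eq; simpl; field; exact e_indep.
Qed.

Lemma in_Rspan_derive Y t D : (forall s, V (Y s)) -> is_derive_C3 Y t D -> V D.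
Proof.
intros HY HD; destruct in_Rspan_basis as (H1 & H2 & H3).
assert (Hcoord : forall A B, V A -> V B -> Im (det3 D A B / de) = 0%R).
{ intros A B HA HB.
  apply (is_derive_C_Im_eq0 (fun s => det3 (Y s) A B / de) t).
  - intros s; apply in_Rspan_det3_real; auto.
  - eapply is_derive_C_eq.
    + apply is_derive_C_div; [apply is_derive_C_det3_l, HD | apply is_derive_C_const | exact e_indep].
    + cbv beta; field; exact e_indep. }
apply in_Rspan_of_coords; apply Hcoord; assumption.
Qed.

Lemma in_Rspan_normalise (l : C) X N : l <> 0 -> V (cscale l X) -> V N -> hform X N <> 0 ->
  V (cscale (/ hform X N) X).
Proof.
intros Hl HX HN Hf.
set (L := Re (hform (cscale l X) N)).
assert (HL : RtoC L = l * hform X N)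
  by (unfold L; rewrite RtoC_Re, hform_scale_l; [reflexivity | now apply in_Rspan_hform_real]).
assert (HL0 : L <> 0%R).
{ intros E; rewrite E in HL; exact (Cmult_neq_0 _ _ Hl Hf (eq_sym HL)). }
replace (cscale (/ hform X N) X) with (cscale (/ L)%R (cscale l X)).
- now apply in_Rspan_scale.
- apply C3_eq; unfold cscale; cbn [c1 c2 c3]; rewrite RtoC_inv, HL by exact HL0;
    field; split; assumption.
Qed.

Lemma in_Rspan_frame_horizontal p w (a b : C) : a <> 0 ->
  V (cscale a (lift p)) -> V (C3plus (cscale b (lift p)) (cscale a (dlift p w))) ->
  horizontal_at p w.
Proof.
intros Ha HY HD; apply horizontal_at_iff.
pose proof (in_Rspan_hform_real _ _ HY HD) as Him.
rewrite hform_scale_l, hform_plus_r, !hform_scale_r, hform_lift_self in Him.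
replace (a * (Cconj b * 0 + Cconj a * hform (lift p) (dlift p w)))
  with (RtoC (Cmod a ^ 2) * hform (lift p) (dlift p w)) in Him
  by (rewrite Cmod2_conj; ring).
rewrite im_scal_l in Him.
apply Rmult_integral in Him as [Hmod | Him]; [|exact Him].
exfalso; apply Ha, Cmod_eq_0; nra.
Qed.

Lemma in_Rspan_frame_det3_real p w (a b : C) N :
  V (cscale a (lift p)) -> V (C3plus (cscale b (lift p)) (cscale a (dlift p w))) -> V N ->
  horizontal_at p w -> Im (a * a * (- Cxy w * Cconj (hform (lift p) N)) / de) = 0%R.
Proof.
intros HY HD HN Hw.
rewrite <- det3_lift_dlift by exact Hw.
replace (a * a * det3 (lift p) (dlift p w) N)
  with (det3 (cscale a (lift p)) (C3plus (cscale b (lift p)) (cscale a (dlift p w))) N)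
  by (unfold det3, cscale, C3plus; cbn [c1 c2 c3]; ring).
now apply in_Rspan_det3_real.
Qed.

Lemma in_Rspan_lifts_normalise p q (lp lq : C) : p <> q -> lp <> 0 -> lq <> 0 ->
  V (cscale lp (lift p)) -> V (cscale lq (lift q)) ->
  exists lq' : C, V (cscale lq' (lift q)) /\ hform (cscale lp (lift p)) (cscale lq' (lift q)) = 1.
Proof.
intros Hpq Hlp Hlq HP HQ.
set (d := Re (hform (cscale lp (lift p)) (cscale lq (lift q)))).
assert (Hd : RtoC d = hform (cscale lp (lift p)) (cscale lq (lift q)))
  by (apply RtoC_Re, in_Rspan_hform_real; assumption).
assert (Hd0 : d <> 0%R).
{ intros E; apply Hpq; apply (hform_scaled_lifts_eq0 lp lq); auto.
  now rewrite <- Hd, E. }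
exists (/ d * lq); split.
- replace (cscale (/ d * lq) (lift q)) with (cscale (/ d)%R (cscale lq (lift q))).
  + now apply in_Rspan_scale.
  + apply C3_eq; unfold cscale; cbn [c1 c2 c3]; rewrite RtoC_inv by exact Hd0; ring.
- rewrite hform_scale_r, hform_scale_l in Hd |- *.
  rewrite Cmult_conj, <- RtoC_inv, Cconj_RtoC, RtoC_inv by exact Hd0.
  transitivity (/ d * (Cconj lq * (lp * hform (lift p) (lift q)))); [ring|].
  rewrite <- Hd; field; intros E; apply Hd0; now injection E.
Qed.

Lemma in_Rspan_lifts_hform_neq0 p q d (lp lq ld : C) : p <> q -> ld <> 0 ->
  V (cscale lp (lift p)) -> V (cscale lq (lift q)) -> V (cscale ld (lift d)) ->
  hform (cscale lp (lift p)) (cscale lq (lift q)) = 1 ->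
  hform (lift d) (C3plus (cscale lp (lift p)) (cscale lq (lift q))) <> 0.
Proof.
(* h(D, P + Q) = 0 makes h(D, P) = -h(Q, D), which Cartan's h(D, P) h(P, Q) h(Q, D) >= 0
   only allows when both vanish, i.e. p = d = q. *)
intros Hpq Hld HP HQ HD Hn E.
set (P := cscale lp (lift p)) in *; set (Q := cscale lq (lift q)) in *;
  set (D := cscale ld (lift d)) in *.
assert (Ha : RtoC (Re (hform D P)) = hform D P) by (apply RtoC_Re, in_Rspan_hform_real; auto).
assert (Hb : RtoC (Re (hform Q D)) = hform Q D) by (apply RtoC_Re, in_Rspan_hform_real; auto).
assert (Hsum : (Re (hform D P) + Re (hform Q D) = 0)%R).
{ apply (f_equal (fun z => ld * z)) in E; rewrite Cmult_0_r, <- hform_scale_l, hform_plus_r in E.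
  fold D in E; rewrite (hform_sym Q D), <- Hb, Cconj_RtoC, <- Ha, <- RtoC_plus in E.
  now injection E. }
assert (Hcyc := hform_scaled_lifts_cycle_nonneg ld lp lq d p q).
fold P Q D in Hcyc; rewrite Hn, <- Ha, <- Hb, Cmult_1_r, <- RtoC_mult in Hcyc; cbn [Re RtoC fst] in Hcyc.
assert (Hb0 : Re (hform Q D) = 0%R) by nra.
assert (Ha0 : Re (hform D P) = 0%R) by nra.
apply Hpq; transitivity d.
- symmetry; apply (hform_scaled_lifts_eq0 ld lp); auto.
  + intros ->; apply C1_nz; rewrite <- Hn; unfold P; now rewrite hform_scale_l, Cmult_0_l.
  + change (hform D P = 0); now rewrite <- Ha, Ha0.
- symmetry; apply (hform_scaled_lifts_eq0 lq ld); auto.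
  + intros ->; apply C1_nz; rewrite <- Hn; unfold Q; now rewrite hform_scale_r, Cconj_RtoC, Cmult_0_l.
  + change (hform Q D = 0); now rewrite <- Hb, Hb0.
Qed.

Section NormalisedLift.
Variables (c : R -> Hpt) (N : C3).
Hypothesis c_smooth : smooth_curve c.
Hypothesis c_in_V : forall s, exists l : C, l <> 0 /\ V (cscale l (lift (c s))).
Hypothesis N_in_V : V N.
Hypothesis hform_lift_N_neq0 : forall s, hform (lift (c s)) N <> 0.

Lemma is_derive_C_hform_lift t :
  is_derive_C (fun s => hform (lift (c s)) N) t (hform (dlift (c t) (velocity c t)) N).
Proof.
destruct c_smooth as (Hx & Hy & Hu).
now apply is_derive_C_hform_l, is_derive_C3_lift; apply smooth_ex_derive.
Qed.

Lemma curve_horizontal_tangent_ratio_real t :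
  horizontal_at (c t) (velocity c t) /\ Im (tangent_ratio c N t / de) = 0%R.
Proof.
set (f s := hform (lift (c s)) N).
assert (HY : forall s, V (cscale (/ f s) (lift (c s)))).
{ intros s; destruct (c_in_V s) as (l & Hl & HX); now apply (in_Rspan_normalise l). }
assert (Hd : is_derive_C3 (fun s => cscale (/ f s) (lift (c s))) t
   (C3plus (cscale (- hform (dlift (c t) (velocity c t)) N / (f t * f t)) (lift (c t)))
           (cscale (/ f t) (dlift (c t) (velocity c t))))).
{ destruct c_smooth as (Hx & Hy & Hu).
  apply is_derive_C3_scale.
  - apply is_derive_C_inv; [apply is_derive_C_hform_lift | apply hform_lift_N_neq0].
  - apply is_derive_C3_lift; apply smooth_ex_derive; assumption. }
assert (HD := in_Rspan_derive _ _ _ HY Hd).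
assert (Hhor : horizontal_at (c t) (velocity c t)).
{ apply (in_Rspan_frame_horizontal _ _ (/ f t) _ (Cinv_neq0 _ (hform_lift_N_neq0 t)) (HY t) HD). }
split; [exact Hhor|].
pose proof (in_Rspan_frame_det3_real _ _ _ _ N (HY t) HD N_in_V Hhor) as Him.
replace (tangent_ratio c N t / de)
  with (RtoC (-1) * (/ f t * / f t * (- Cxy (velocity c t) * Cconj (hform (lift (c t)) N)) / de)).
- now rewrite im_scal_l, Him, Rmult_0_r.
- unfold tangent_ratio, f; field; repeat split; first [exact e_indep | apply hform_lift_N_neq0].
Qed.

Lemma continuous_Re_tangent_ratio t : continuous (fun s => Re (tangent_ratio c N s / de)) t.
Proof.
destruct c_smooth as (Hx & Hy & _).
assert (Hv : is_derive_C (fun s => Cxy (velocity c s)) t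
               (Derive (Derive (fun s => cx (c s))) t, Derive (Derive (fun s => cy (c s))) t)).
{ split; apply Derive_correct; [exact (Hx 2%nat t) | exact (Hy 2%nat t)]. }
assert (Hf := is_derive_C_hform_lift t).
eapply is_derive_C_continuous_Re, is_derive_C_div; [| apply is_derive_C_const | exact e_indep].
apply is_derive_C_div.
- apply is_derive_C_mult; [exact Hv | apply is_derive_C_conj, Hf].
- apply is_derive_C_mult; exact Hf.
- apply Cmult_neq_0; apply hform_lift_N_neq0.
Qed.

Hypothesis c_regular : forall t, nonzero3 (velocity c t).

Lemma tangent_ratio_neq0 t : tangent_ratio c N t <> 0.
Proof.
assert (Hw : Cxy (velocity c t) <> 0)
  by (apply (Cxy_neq0 (c t)); [apply curve_horizontal_tangent_ratio_real | apply c_regular]).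
assert (Hf := hform_lift_N_neq0 t).
unfold tangent_ratio, Cdiv.
repeat apply Cmult_neq_0; try apply Cinv_neq0; try apply Cmult_neq_0; auto using Cconj_neq0.
Qed.

Lemma tangent_ratio_pos_proportional r0 r1 :
  exists K : R, (0 < K)%R /\ tangent_ratio c N r0 = K * tangent_ratio c N r1.
Proof.
set (phi t := Re (tangent_ratio c N t / de)).
assert (Htr : forall t, tangent_ratio c N t = phi t * de).
{ intros t; unfold phi; rewrite RtoC_Re by apply curve_horizontal_tangent_ratio_real.
  field; exact e_indep. }
assert (Hnz : forall t, phi t <> 0%R).
{ intros t E; apply (tangent_ratio_neq0 t); rewrite Htr, E; ring. }
assert (Hsign := continuous_nonvanishing_same_sign phi r0 r1 continuous_Re_tangent_ratio Hnz).
exists (phi r0 / phi r1)%R; split.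
- assert (0 < phi r1 * phi r1)%R by (pose proof (Hnz r1); nra).
  replace (phi r0 / phi r1)%R with (phi r0 * phi r1 / (phi r1 * phi r1))%R by (field; auto).
  apply Rdiv_lt_0_compat; assumption.
- rewrite !Htr, RtoC_div by apply Hnz.
  field; intros E; apply (Hnz r1); now injection E.
Qed.
End NormalisedLift.

End RealForm.

Section TangentAlgebra.
Local Open Scope C_scope.

Lemma tangent_ratio_relation (lp lq rho z0 z1 : C) (K : R) :
  lp * (Cconj lq * rho) = 1 ->
  z0 * Cconj (Cconj lq * rho) / (Cconj lq * rho * (Cconj lq * rho))
    = K * (z1 * Cconj (Cconj lp * Cconj rho) / (Cconj lp * Cconj rho * (Cconj lp * Cconj rho))) ->
  Cconj z0 = (K / Cmod lp ^ 2)%R * Cconj z1 * Cconj rho / (rho * rho).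
Proof.
intros Hn H.
assert (Hlp : lp <> 0) by (intros ->; apply C1_nz; rewrite <- Hn; ring).
assert (Hrho : rho <> 0) by (intros ->; apply C1_nz; rewrite <- Hn; ring).
assert (Elq : lq = / (Cconj lp * Cconj rho)).
{ rewrite <- Cmult_conj, <- Cinv_conj, <- (Cconj_conj lq) by (now apply Cmult_neq_0).
  f_equal; transitivity (lp * (Cconj lq * rho) / (lp * rho)).
  - field; split; assumption.
  - rewrite Hn; field; split; assumption. }
clear Hn; subst lq.
assert (Hlp' := Cconj_neq0 _ Hlp); assert (Hrho' := Cconj_neq0 _ Hrho).
repeat first [ rewrite Cinv_conj in H by (apply Cmult_neq_0; assumption)
              | rewrite Cmult_conj in H | rewrite Cconj_conj in H ].
assert (Ez0 : z0 = K / (lp * Cconj lp) * z1 * rho / (Cconj rho * Cconj rho)).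
{ match type of H with ?L = _ => transitivity (L * (Cconj lp / (lp * lp))) end.
  - field; repeat split; assumption.
  - rewrite H; field; repeat split; assumption. }
rewrite Ez0.
repeat first [ rewrite Cdiv_conj by (repeat apply Cmult_neq_0; assumption)
             | rewrite Cmult_conj | rewrite Cconj_conj | rewrite Cconj_RtoC ].
rewrite RtoC_div, Cmod2_conj.
- field; repeat split; assumption.
- apply pow_nonzero; intros E; apply Hlp, Cmod_eq_0, E.
Qed.
End TangentAlgebra.

Lemma Rcircle_tangent_relation (G : Hpt -> Prop) (c : R -> Hpt) r0 r1 :
  RcircleH G -> oriented_param G c -> c r0 <> c r1 ->
  exists K : R, 0 < K /\
    Cconj (Cxy (velocity c r0))
    = (K * Cconj (Cxy (velocity c r1)) * Cconj (rhoH (c r0) (c r1))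
       / (rhoH (c r0) (c r1) * rhoH (c r0) (c r1)))%C.
Proof.
intros (e1 & e2 & e3 & Hdet & Hreal & HG) (Hsm & Hreg & HcG) Hpq.
set (p := c r0) in *; set (q := c r1) in *.
assert (Hlift : forall s, exists l : C, l <> 0 /\ in_Rspan e1 e2 e3 (cscale l (lift (c s))))
  by (intros s; apply HG, HcG).
destruct (Hlift r0) as (lp & Hlp & HP), (Hlift r1) as (lq0 & Hlq0 & HQ0).
destruct (in_Rspan_lifts_normalise e1 e2 e3 Hreal p q lp lq0 Hpq Hlp Hlq0 HP HQ0)
  as (lq & HQ & Hn).
set (N := C3plus (cscale lp (lift p)) (cscale lq (lift q))).
assert (HN : in_Rspan e1 e2 e3 N) by (apply in_Rspan_plus; assumption).
assert (Hf : forall s, hform (lift (c s)) N <> 0).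
{ intros s; destruct (Hlift s) as (ld & Hld & HD).
  eapply in_Rspan_lifts_hform_neq0; eassumption. }
destruct (tangent_ratio_pos_proportional e1 e2 e3 Hdet Hreal c N Hsm Hlift HN Hf Hreg r0 r1)
  as (K & HK & Hratio).
assert (Hf0 : hform (lift p) N = (Cconj lq * rhoH p q)%C).
{ unfold N; rewrite hform_plus_r, !hform_scale_r, hform_lift_self, hform_lift; ring. }
assert (Hf1 : hform (lift q) N = (Cconj lp * Cconj (rhoH p q))%C).
{ unfold N; rewrite hform_plus_r, !hform_scale_r, hform_lift_self, hform_sym, hform_lift; ring. }
rewrite hform_scale_l, hform_scale_r, hform_lift in Hn.
unfold tangent_ratio in Hratio; fold p q in Hratio; rewrite Hf0, Hf1 in Hratio.
exists (K / Cmod lp ^ 2); split.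
- apply Rdiv_lt_0_compat; [exact HK | apply pow_lt, Cmod_gt_0, Hlp].
- exact (tangent_ratio_relation lp lq (rhoH p q) _ _ K Hn Hratio).
Qed.

Lemma abs_arg_scale (K : R) z : 0 < K -> abs_arg (K * z) = abs_arg z.
Proof.
intros HK; unfold abs_arg; f_equal.
destruct (Ceq_dec z 0) as [->|Hz].
- now rewrite Cmult_0_r.
- rewrite re_scal_l, Cmod_mult, Cmod_R, Rabs_pos_eq by lra.
  field; split; [apply Rgt_not_eq, Cmod_gt_0, Hz | lra].
Qed.

Lemma hangle_abs_arg v w : hangle v w = abs_arg (Cxy v * Cconj (Cxy w)).
Proof.
unfold hangle, abs_arg; rewrite Cmod_mult, Cmod_conj.
unfold hinner, Cxy, Cmod, Cconj, Cmult, Re; simpl.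
f_equal; f_equal; [ring | f_equal; f_equal; ring].
Qed.

Theorem proposition6p2 :
  (* Part 1 *)
  (forall (p q : Hpt) (a b a' b' : R), p <> q ->
     Cmod (OmegaH p q (hvec p a b) (hvec q a' b'))
     = 2 * (hnorm2 a b * hnorm2 a' b') / (dH p q ^ 2))
  /\
  (* Part 2: K = gamma(R) a Legendrian knot (oriented by gamma), p = gamma s0,
     q = gamma s1 distinct, v, v' positively tangent to K at p, q;
     G1 = Gamma_K(p,q) an R-circle through p, q tangent to K at p, oriented by K at p;
     G2 = Gamma_K(q,p) an R-circle through q, p tangent to K at q, oriented by K at q;
     theta_K(p,q) = angle at p between the oriented G1 and G2. *)
  (forall (gamma : R -> Hpt) (T s0 s1 lam mu : R)
          (G1 G2 : Hpt -> Prop) (c1 c2 : R -> Hpt) (t0 r0 r1 al be : R),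
     legendrian_knot gamma T ->
     gamma s0 <> gamma s1 ->
     0 < lam -> 0 < mu ->
     RcircleH G1 -> G1 (gamma s0) -> G1 (gamma s1) ->
     oriented_param G1 c1 -> c1 t0 = gamma s0 ->
     0 < al -> velocity c1 t0 = scale3 al (velocity gamma s0) ->
     RcircleH G2 -> G2 (gamma s1) -> G2 (gamma s0) ->
     oriented_param G2 c2 -> c2 r1 = gamma s1 -> c2 r0 = gamma s0 ->
     0 < be -> velocity c2 r1 = scale3 be (velocity gamma s1) ->
     abs_arg (OmegaH (gamma s0) (gamma s1)
                           (scale3 lam (velocity gamma s0))
                           (scale3 mu (velocity gamma s1)))
     = hangle (velocity c1 t0) (velocity c2 r0)).
Proof.
split.
- intros p q a b a' b' Hpq; now apply Cmod_OmegaH_hvec.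
- (* Gamma_K(p, q) enters only through its tangent at p, which [Hv1] fixes. *)
  intros gamma T s0 s1 lam mu G1 G2 k1 k2 t0 r0 r1 al be HK Hpq Hlam Hmu _ _ _ _ _ Hal Hv1
    HG2 _ _ Hk2 Hq Hp Hbe Hv2.
  destruct HK as (_ & _ & _ & _ & _ & Hhor).
  assert (Hrho : rhoH (gamma s0) (gamma s1) <> 0%C) by (intros E; apply Hpq, rhoH_eq0, E).
  destruct (Rcircle_tangent_relation G2 k2 r0 r1 HG2 Hk2) as (K & HK & Hw);
    [now rewrite Hp, Hq|].
  rewrite Hp, Hq, Hv2, Cxy_scale3 in Hw.
  rewrite OmegaH_horizontal, hangle_abs_arg, Hv1 by (auto using horizontal_at_scale3).
  set (X := (Cxy (velocity gamma s0) * Cconj (Cxy (velocity gamma s1))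
             * Cconj (rhoH (gamma s0) (gamma s1))
             / (rhoH (gamma s0) (gamma s1) * rhoH (gamma s0) (gamma s1)))%C).
  replace (2 * _ * _ * _ / _)%C with (RtoC (2 * lam * mu) * X)%C.
  2: { unfold X; rewrite !Cxy_scale3, Cmult_conj, Cconj_RtoC, !RtoC_mult; field; exact Hrho. }
  replace (Cxy (scale3 al _) * _)%C with (RtoC (al * K * be) * X)%C.
  2: { unfold X; rewrite Cxy_scale3, Hw, Cmult_conj, Cconj_RtoC, !RtoC_mult; field; exact Hrho. }
  rewrite !abs_arg_scale; [reflexivity | ..]; apply Rmult_lt_0_compat; try apply Rmult_lt_0_compat; lra.
Qed.
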